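(* In the setting below, consider a cube in $\mathcal C$ with vertices $X',Y',Z',W'$ (top) and $X,Y,Z,W$ (bottom), edges $j'\colon X'\to Y'$, $i'\colon Z'\to W'$, $j\colon X\to Y$, $i\colon Z\to W$ in $\mathcal A$; $q'\colon X'\to Z'$, $p'\colon Y'\to W'$, $q\colon X\to Z$, $p\colon Y\to W$ in $\mathcal B$; $x\colon X'\to X$, $y\colon Y'\to Y$, $z\colon Z'\to Z$, $w\colon W'\to W$ in $\mathcal C$; and face $2$-cells: right $I$: $py\Rightarrow wp'$; left $I'$: $qx\Rightarrow zq'$; front $J$: $\beta\colon wi'\Rightarrow iz$; back $J'$: $\beta'\colon yj'\Rightarrow jx$; bottom $K$: $pj\Rightarrow iq$; top $K'$: $p'j'\Rightarrow i'q'$. Each face is regarded as a down-square (for $I$: top $y$, left $p'$, right $p$, bottom $w$; for $I'$: top $x$, left $q'$, right $q$, bottom $z$; for $J$: top $i'$, left $z$, right $w$, bottom $i$; for $J'$: top $j'$, left $x$, right $y$, bottom $j$; $K$, $K'$ as written). Assume the cube is $2$-commutative, i.e. the pasted $2$-cells $pyj'\Rightarrow wp'j'\Rightarrow wi'q'\Rightarrow izq'$ (via $I,K',J$) and $pyj'\Rightarrow pjx\Rightarrow iqx\Rightarrow izq'$ (via $J',K,I'$) coincide, and assume $B_K$ and $B_{K'}$ are invertible. Then the composite $i'_!z^*q_*\xRightarrow{B_{I'}}i'_!q'_*x^*\xRightarrow{G_{K'}}p'_*j'_!x^*\xRightarrow{A_{J'}}p'_*y^*j_!$ equals $i'_!z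^*q_*\xRightarrow{A_J}w^*i_!q_*\xRightarrow{G_K}w^*p_*j_!\xRightarrow{B_I}p'_*y^*j_!$.
   Context: Setting. $\mathcal C,\mathcal D$ are $2$-categories; $\mathcal A,\mathcal B$ are $2$-subcategories of $\mathcal C$ (hom-inclusions fully faithful and injective on objects). Given: a pseudofunctor $\mathcal C\to\mathcal D^{\mathrm{coop}}$, $X\mapsto X$, $f\mapsto f^*$ ($f\colon X\to Y$ gives $f^*\colon Y\to X$), $(\alpha\colon f\Rightarrow g)\mapsto\alpha^*\colon g^*\Rightarrow f^*$, coherence $(gf)^*\cong f^*g^*$; pseudofunctors $\mathcal B\to\mathcal D$, $p\mapsto p_*$, and $\mathcal A\to\mathcal D$, $i\mapsto i_!$; adjunctions $p^*\dashv p_*$ (unit $\eta_p\colon1\Rightarrow p_*p^*$, counit $\epsilon_p\colon p^*p_*\Rightarrow1$) for $p\in\mathcal B$ and $i_!\dashv i^*$ (unit $\eta_i\colon1\Rightarrow i^*i_!$, counit $\epsilon_i\colon i_!i^*\Rightarrow1$) for $i\in\mathcal A$, compatible with the pseudofunctor structures (units/counits of composites correspond under coherence isomorphisms to composites; $2$-cells act by mates). $\cong$ denotes coherence isomorphisms. A down-square $D$: $j\colon X\to Y$ (top), $q\colon X\to Z$ (left), $i\colon Z\to W$ (bottom), $p\colon Y\to W$ (right), $\alpha\colon pj\Rightarrow iq$. If $p,q\in\mathcal B$: $B_D\colon i^*p_*\Rightarrow q_*j^*$ is $i^*p_*\xRightarrow{\eta_q}q_*q^*i^*p_*\cong q_*(iq)^*p_*\xRightarrow{\alpha^*}q_*(pj)^*p_*\cong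 q_*j^*p^*p_*\xRightarrow{\epsilon_p}q_*j^*$. If $i,j\in\mathcal A$: $A_D\colon j_!q^*\Rightarrow p^*i_!$ is $j_!q^*\xRightarrow{\eta_i}j_!q^*i^*i_!\cong j_!(iq)^*i_!\xRightarrow{\alpha^*}j_!(pj)^*i_!\cong j_!j^*p^*i_!\xRightarrow{\epsilon_j}p^*i_!$. If $i,j\in\mathcal A$, $p,q\in\mathcal B$ and $B_D$ is invertible, $G_D\colon i_!q_*\Rightarrow p_*j_!$ is $i_!q_*\xRightarrow{\eta_j}i_!q_*j^*j_!\xRightarrow{B_D^{-1}}i_!i^*p_*j_!\xRightarrow{\epsilon_i}p_*j_!$. (Here $B_I$ and $B_{I'}$ use that $p,p',q,q'\in\mathcal B$, and $A_J,A_{J'}$ that $i,i',j,j'\in\mathcal A$.) *)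

Set Implicit Arguments.
Unset Strict Implicit.

(* A strict 2-category: 1-cells compose strictly associatively and unitally
   (Leibniz equalities), 2-cells form hom-categories with vertical
   composition [vc b a] (= b after a) and horizontal composition [hc]. *)
Record Cat2 := {
  ob :> Type;
  hom : ob -> ob -> Type;
  idm : forall X, hom X X;
  cmp : forall X Y Z, hom Y Z -> hom X Y -> hom X Z;
  cell : forall X Y, hom X Y -> hom X Y -> Type;
  i2 : forall X Y (f : hom X Y), cell f f;
  vc : forall X Y (f g h : hom X Y), cell g h -> cell f g -> cell f h;
  hc : forall X Y Z (f f' : hom Y Z) (g g' : hom X Y),
        cell f f' -> cell g g' -> cell (cmp f g) (cmp f' g');
  cmpA : forall X Y Z W (h : hom Z W) (g : hom Y Z) (f : hom X Y),
        cmp h (cmp g f) = cmp (cmp h g) f;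
  cmp1l : forall X Y (f : hom X Y), cmp (idm Y) f = f;
  cmp1r : forall X Y (f : hom X Y), cmp f (idm X) = f
}.

Arguments hom {c} X Y.
Arguments idm {c} X.
Arguments cmp {c X Y Z} g f.
Arguments cell {c X Y} f g.
Arguments i2 {c X Y} f.
Arguments vc {c X Y f g h} b a.
Arguments hc {c X Y Z f f' g g'} b a.
Arguments cmpA {c X Y Z W} h g f.
Arguments cmp1l {c X Y} f.
Arguments cmp1r {c X Y} f.

Definition ecast (C : Cat2) (X Y : C) (f g : hom X Y) (e : f = g) : cell f g :=
  match e in _ = g' return cell f g' with eq_refl => i2 f end.
Arguments ecast {C X Y f g} e.

Record Is2Cat (C : Cat2) : Prop := {
  vA : forall (X Y : C) (f g h k : hom X Y) (c : cell h k) (b : cell g h) (a : cell f g),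
        vc c (vc b a) = vc (vc c b) a;
  v1l : forall (X Y : C) (f g : hom X Y) (a : cell f g), vc (i2 g) a = a;
  v1r : forall (X Y : C) (f g : hom X Y) (a : cell f g), vc a (i2 f) = a;
  hc_v : forall (X Y Z : C) (f f' f'' : hom Y Z) (g g' g'' : hom X Y)
           (b : cell f f') (b' : cell f' f'') (a : cell g g') (a' : cell g' g''),
        hc (vc b' b) (vc a' a) = vc (hc b' a') (hc b a);
  hc_1 : forall (X Y Z : C) (f : hom Y Z) (g : hom X Y), hc (i2 f) (i2 g) = i2 (cmp f g);
  hcA : forall (X Y Z W : C) (h h' : hom Z W) (g g' : hom Y Z) (f f' : hom X Y)
           (c : cell h h') (b : cell g g') (a : cell f f'),
        hc c (hc b a) = vc (ecast (eq_sym (cmpA h' g' f'))) (vc (hc (hc c b) a) (ecast (cmpA h g f)));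
  hc1l : forall (X Y : C) (f f' : hom X Y) (a : cell f f'),
        hc (i2 (idm Y)) a = vc (ecast (eq_sym (cmp1l f'))) (vc a (ecast (cmp1l f)));
  hc1r : forall (X Y : C) (f f' : hom X Y) (a : cell f f'),
        hc a (i2 (idm X)) = vc (ecast (eq_sym (cmp1r f'))) (vc a (ecast (cmp1r f)))
}.

(* A 2-subcategory given by a class of objects and a class of 1-cells,
   closed under identities and composition; it contains all 2-cells of C
   between its 1-cells (hom-inclusions fully faithful). *)
Record Sub2 (C : Cat2) := {
  sob : C -> Prop;
  smor : forall X Y : C, hom X Y -> Prop;
  smor_ob : forall (X Y : C) (f : hom X Y), smor f -> sob X /\ sob Y;
  sid : forall X : C, sob X -> smor (idm X);
  scmp : forall (X Y Z : C) (g : hom Y Z) (f : hom X Y), smor g -> smor f -> smor (cmp g f)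
}.
Arguments smor {C} _ {X Y} f.

Record PsContra (C D : Cat2) (P0 : C -> D) := {
  pb : forall X Y : C, hom X Y -> hom (P0 Y) (P0 X);
  pb2 : forall (X Y : C) (f g : hom X Y), cell f g -> cell (pb g) (pb f);
  phi : forall (X Y Z : C) (g : hom Y Z) (f : hom X Y), cell (pb (cmp g f)) (cmp (pb f) (pb g));
  phiI : forall (X Y Z : C) (g : hom Y Z) (f : hom X Y), cell (cmp (pb f) (pb g)) (pb (cmp g f));
  pio : forall X : C, cell (pb (idm X)) (idm (P0 X));
  pioI : forall X : C, cell (idm (P0 X)) (pb (idm X))
}.
Arguments pb {C D P0} _ {X Y} f.
Arguments pb2 {C D P0} _ {X Y f g} a.
Arguments phi {C D P0} _ {X Y Z} g f.
Arguments phiI {C D P0} _ {X Y Z} g f.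
Arguments pio {C D P0} _ X.
Arguments pioI {C D P0} _ X.

Record PsContraLaws (C D : Cat2) (P0 : C -> D) (F : @PsContra C D P0) : Prop := {
  pb2_v : forall (X Y : C) (f g h : hom X Y) (b : cell g h) (a : cell f g),
      pb2 F (vc b a) = vc (pb2 F a) (pb2 F b);
  pb2_1 : forall (X Y : C) (f : hom X Y), pb2 F (i2 f) = i2 (pb F f);
  phi_iso1 : forall (X Y Z : C) (g : hom Y Z) (f : hom X Y), vc (phiI F g f) (phi F g f) = i2 _;
  phi_iso2 : forall (X Y Z : C) (g : hom Y Z) (f : hom X Y), vc (phi F g f) (phiI F g f) = i2 _;
  pio_iso1 : forall X : C, vc (pioI F X) (pio F X) = i2 _;
  pio_iso2 : forall X : C, vc (pio F X) (pioI F X) = i2 _;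
  phi_nat : forall (X Y Z : C) (g g' : hom Y Z) (f f' : hom X Y) (b : cell g g') (a : cell f f'),
      vc (phi F g f) (pb2 F (hc b a)) = vc (hc (pb2 F a) (pb2 F b)) (phi F g' f');
  phi_assoc : forall (X Y Z W : C) (h : hom Z W) (g : hom Y Z) (f : hom X Y),
      vc (hc (phi F g f) (i2 (pb F h))) (phi F h (cmp g f))
      = vc (ecast (cmpA (pb F f) (pb F g) (pb F h)))
          (vc (hc (i2 (pb F f)) (phi F h g))
             (vc (phi F (cmp h g) f) (ecast (f_equal (pb F) (cmpA h g f)))));
  phi_unitr : forall (X Y : C) (f : hom X Y),
      vc (ecast (cmp1l (pb F f))) (vc (hc (pio F X) (i2 (pb F f))) (phi F f (idm X)))
      = ecast (f_equal (pb F) (cmp1r f));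
  phi_unitl : forall (X Y : C) (f : hom X Y),
      vc (ecast (cmp1r (pb F f))) (vc (hc (i2 (pb F f)) (pio F Y)) (phi F (idm Y) f))
      = ecast (f_equal (pb F) (cmp1l f))
}.

Record PsSub (C D : Cat2) (S : Sub2 C) (P0 : C -> D) := {
  fs : forall (X Y : C) (f : hom X Y), smor S f -> hom (P0 X) (P0 Y);
  fs2 : forall (X Y : C) (f g : hom X Y) (hf : smor S f) (hg : smor S g),
      cell f g -> cell (fs hf) (fs hg);
  psi : forall (X Y Z : C) (g : hom Y Z) (f : hom X Y) (hg : smor S g) (hf : smor S f)
      (hgf : smor S (cmp g f)), cell (cmp (fs hg) (fs hf)) (fs hgf);
  psiI : forall (X Y Z : C) (g : hom Y Z) (f : hom X Y) (hg : smor S g) (hf : smor S f)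
      (hgf : smor S (cmp g f)), cell (fs hgf) (cmp (fs hg) (fs hf));
  sio : forall (X : C) (h : smor S (idm X)), cell (fs h) (idm (P0 X));
  sioI : forall (X : C) (h : smor S (idm X)), cell (idm (P0 X)) (fs h)
}.
Arguments fs {C D S P0} _ {X Y f} hf.
Arguments fs2 {C D S P0} _ {X Y f g} hf hg a.
Arguments psi {C D S P0} _ {X Y Z g f} hg hf hgf.
Arguments psiI {C D S P0} _ {X Y Z g f} hg hf hgf.
Arguments sio {C D S P0} _ {X} h.
Arguments sioI {C D S P0} _ {X} h.

Record PsSubLaws (C D : Cat2) (S : Sub2 C) (P0 : C -> D) (G : @PsSub C D S P0) : Prop := {
  fs2_v : forall (X Y : C) (f g h : hom X Y) (hf : smor S f) (hg : smor S g) (hh : smor S h)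
      (b : cell g h) (a : cell f g),
      fs2 G hf hh (vc b a) = vc (fs2 G hg hh b) (fs2 G hf hg a);
  fs2_1 : forall (X Y : C) (f : hom X Y) (hf : smor S f), fs2 G hf hf (i2 f) = i2 (fs G hf);
  psi_iso1 : forall (X Y Z : C) (g : hom Y Z) (f : hom X Y) (hg : smor S g) (hf : smor S f) (hgf : smor S (cmp g f)),
      vc (psiI G hg hf hgf) (psi G hg hf hgf) = i2 _;
  psi_iso2 : forall (X Y Z : C) (g : hom Y Z) (f : hom X Y) (hg : smor S g) (hf : smor S f) (hgf : smor S (cmp g f)),
      vc (psi G hg hf hgf) (psiI G hg hf hgf) = i2 _;
  sio_iso1 : forall (X : C) (h : smor S (idm X)), vc (sioI G h) (sio G h) = i2 _;
  sio_iso2 : forall (X : C) (h : smor S (idm X)), vc (sio G h) (sioI G h) = i2 _;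
  psi_nat : forall (X Y Z : C) (g g' : hom Y Z) (f f' : hom X Y)
      (hg : smor S g) (hg' : smor S g') (hf : smor S f) (hf' : smor S f')
      (hgf : smor S (cmp g f)) (hgf' : smor S (cmp g' f')) (b : cell g g') (a : cell f f'),
      vc (psi G hg' hf' hgf') (hc (fs2 G hg hg' b) (fs2 G hf hf' a))
      = vc (fs2 G hgf hgf' (hc b a)) (psi G hg hf hgf);
  psi_assoc : forall (X Y Z W : C) (h : hom Z W) (g : hom Y Z) (f : hom X Y)
      (hh : smor S h) (hg : smor S g) (hf : smor S f) (hgf : smor S (cmp g f))
      (hhg : smor S (cmp h g)) (h1 : smor S (cmp h (cmp g f))) (h2 : smor S (cmp (cmp h g) f)),
      vc (psi G hh hgf h1) (hc (i2 (fs G hh)) (psi G hg hf hgf))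
      = vc (fs2 G h2 h1 (ecast (eq_sym (cmpA h g f))))
          (vc (psi G hhg hf h2)
             (vc (hc (psi G hh hg hhg) (i2 (fs G hf)))
                (ecast (cmpA (fs G hh) (fs G hg) (fs G hf)))));
  psi_unitr : forall (X Y : C) (f : hom X Y) (hf : smor S f) (hid : smor S (idm X))
      (hfid : smor S (cmp f (idm X))),
      vc (psi G hf hid hfid) (hc (i2 (fs G hf)) (sioI G hid))
      = vc (fs2 G hf hfid (ecast (eq_sym (cmp1r f)))) (ecast (cmp1r (fs G hf)));
  psi_unitl : forall (X Y : C) (f : hom X Y) (hf : smor S f) (hid : smor S (idm Y))
      (hidf : smor S (cmp (idm Y) f)),
      vc (psi G hid hf hidf) (hc (sioI G hid) (i2 (fs G hf)))
      = vc (fs2 G hf hidf (ecast (eq_sym (cmp1l f)))) (ecast (cmp1l (fs G hf)))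
}.

Definition IsAdj (D : Cat2) (X Y : D) (L : hom X Y) (R : hom Y X)
    (eta : cell (idm X) (cmp R L)) (eps : cell (cmp L R) (idm Y)) : Prop :=
  vc (ecast (cmp1l L)) (vc (hc eps (i2 L)) (vc (ecast (cmpA L R L))
      (vc (hc (i2 L) eta) (ecast (eq_sym (cmp1r L)))))) = i2 L
  /\
  vc (ecast (cmp1r R)) (vc (hc (i2 R) eps) (vc (ecast (eq_sym (cmpA R L R)))
      (vc (hc eta (i2 R)) (ecast (eq_sym (cmp1l R)))))) = i2 R.

Arguments IsAdj {D X Y} L R eta eps.

(* C, D strict 2-categories; A, B sub-2-categories of C; a pseudofunctor
   C -> D^coop (f |-> f^* ), pseudofunctors B -> D (p |-> p_* ) and
   A -> D (i |-> i_! ), all with the same object map P0 (written X |-> X in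
   the paper); units and counits of the adjunctions p^* -| p_* (p in B), i_! -| i^* (i in A). *)
Record Setting := {
  sC : Cat2;
  sD : Cat2;
  sA : Sub2 sC;
  sB : Sub2 sC;
  sP0 : sC -> sD;
  sF : @PsContra sC sD sP0;
  sBs : @PsSub sC sD sB sP0;
  sAl : @PsSub sC sD sA sP0;
  etaB : forall (X Y : sC) (p : hom X Y) (hp : smor sB p),
      cell (idm (sP0 Y)) (cmp (fs sBs hp) (pb sF p));
  epsB : forall (X Y : sC) (p : hom X Y) (hp : smor sB p),
      cell (cmp (pb sF p) (fs sBs hp)) (idm (sP0 X));
  etaA : forall (X Y : sC) (i : hom X Y) (hi : smor sA i),
      cell (idm (sP0 X)) (cmp (pb sF i) (fs sAl hi));
  epsA : forall (X Y : sC) (i : hom X Y) (hi : smor sA i),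
      cell (cmp (fs sAl hi) (pb sF i)) (idm (sP0 Y))
}.
Arguments sP0 : clear implicits.
Arguments sF : clear implicits.
Arguments sBs : clear implicits.
Arguments sAl : clear implicits.
Arguments etaB _ {X Y p} hp.
Arguments epsB _ {X Y p} hp.
Arguments etaA _ {X Y i} hi.
Arguments epsA _ {X Y i} hi.

Definition ps (S : Setting) (X Y : sC S) (p : hom X Y) (hp : smor (sB S) p)
  : hom (sP0 S X) (sP0 S Y) := fs (sBs S) hp.
Definition sh (S : Setting) (X Y : sC S) (i : hom X Y) (hi : smor (sA S) i)
  : hom (sP0 S X) (sP0 S Y) := fs (sAl S) hi.
Definition us (S : Setting) (X Y : sC S) (f : hom X Y)
  : hom (sP0 S Y) (sP0 S X) := pb (sF S) f.
Arguments ps S {X Y p} hp.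
Arguments sh S {X Y i} hi.
Arguments us S {X Y} f.

Record SettingLaws (S : Setting) : Prop := {
  law_C : Is2Cat (sC S);
  law_D : Is2Cat (sD S);
  law_F : PsContraLaws (sF S);
  law_Bs : PsSubLaws (sBs S);
  law_Al : PsSubLaws (sAl S);
  adj_B : forall (X Y : sC S) (p : hom X Y) (hp : smor (sB S) p),
      IsAdj (us S p) (ps S hp) (etaB S hp) (epsB S hp);
  adj_A : forall (X Y : sC S) (i : hom X Y) (hi : smor (sA S) i),
      IsAdj (sh S hi) (us S i) (etaA S hi) (epsA S hi);
  unitB_comp : forall (X Y Z : sC S) (p : hom X Y) (q : hom Y Z)
      (hp : smor (sB S) p) (hq : smor (sB S) q) (hqp : smor (sB S) (cmp q p)),
      etaB S hqp =
      vc (hc (i2 (ps S hqp)) (phiI (sF S) q p))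
      (vc (ecast (eq_sym (cmpA (ps S hqp) (us S p) (us S q))))
      (vc (hc (hc (psi (sBs S) hq hp hqp) (i2 (us S p))) (i2 (us S q)))
      (vc (hc (ecast (cmpA (ps S hq) (ps S hp) (us S p))) (i2 (us S q)))
      (vc (hc (hc (i2 (ps S hq)) (etaB S hp)) (i2 (us S q)))
      (vc (hc (ecast (eq_sym (cmp1r (ps S hq)))) (i2 (us S q)))
          (etaB S hq))))));
  counitB_comp : forall (X Y Z : sC S) (p : hom X Y) (q : hom Y Z)
      (hp : smor (sB S) p) (hq : smor (sB S) q) (hqp : smor (sB S) (cmp q p)),
      epsB S hqp =
      vc (epsB S hp)
      (vc (hc (i2 (us S p)) (ecast (cmp1l (ps S hp))))
      (vc (hc (i2 (us S p)) (hc (epsB S hq) (i2 (ps S hp))))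
      (vc (hc (i2 (us S p)) (ecast (cmpA (us S q) (ps S hq) (ps S hp))))
      (vc (ecast (eq_sym (cmpA (us S p) (us S q) (cmp (ps S hq) (ps S hp)))))
          (hc (phi (sF S) q p) (psiI (sBs S) hq hp hqp))))));
  unitA_comp : forall (X Y Z : sC S) (i : hom X Y) (k : hom Y Z)
      (hi : smor (sA S) i) (hk : smor (sA S) k) (hki : smor (sA S) (cmp k i)),
      etaA S hki =
      vc (hc (phiI (sF S) k i) (psi (sAl S) hk hi hki))
      (vc (ecast (cmpA (us S i) (us S k) (cmp (sh S hk) (sh S hi))))
      (vc (hc (i2 (us S i)) (ecast (eq_sym (cmpA (us S k) (sh S hk) (sh S hi)))))
      (vc (hc (i2 (us S i)) (hc (etaA S hk) (i2 (sh S hi))))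
      (vc (hc (i2 (us S i)) (ecast (eq_sym (cmp1l (sh S hi)))))
          (etaA S hi)))));
  counitA_comp : forall (X Y Z : sC S) (i : hom X Y) (k : hom Y Z)
      (hi : smor (sA S) i) (hk : smor (sA S) k) (hki : smor (sA S) (cmp k i)),
      epsA S hki =
      vc (epsA S hk)
      (vc (hc (i2 (sh S hk)) (ecast (cmp1l (us S k))))
      (vc (hc (i2 (sh S hk)) (hc (epsA S hi) (i2 (us S k))))
      (vc (hc (i2 (sh S hk)) (ecast (cmpA (sh S hi) (us S i) (us S k))))
      (vc (ecast (eq_sym (cmpA (sh S hk) (sh S hi) (cmp (us S i) (us S k)))))
          (hc (psiI (sAl S) hk hi hki) (phi (sF S) k i))))));
  (* 2-cells act by mates *)
  mate_B : forall (X Y : sC S) (p p' : hom X Y) (hp : smor (sB S) p) (hp' : smor (sB S) p')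
      (a : cell p p'),
      fs2 (sBs S) hp hp' a =
      vc (ecast (cmp1r (ps S hp')))
      (vc (hc (i2 (ps S hp')) (epsB S hp))
      (vc (ecast (eq_sym (cmpA (ps S hp') (us S p) (ps S hp))))
      (vc (hc (hc (i2 (ps S hp')) (pb2 (sF S) a)) (i2 (ps S hp)))
      (vc (hc (etaB S hp') (i2 (ps S hp)))
          (ecast (eq_sym (cmp1l (ps S hp))))))));
  mate_A : forall (X Y : sC S) (i i' : hom X Y) (hi : smor (sA S) i) (hi' : smor (sA S) i')
      (a : cell i i'),
      fs2 (sAl S) hi hi' a =
      vc (ecast (cmp1l (sh S hi')))
      (vc (hc (epsA S hi) (i2 (sh S hi')))
      (vc (ecast (cmpA (sh S hi) (us S i) (sh S hi')))
      (vc (hc (i2 (sh S hi)) (hc (pb2 (sF S) a) (i2 (sh S hi'))))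
      (vc (hc (i2 (sh S hi)) (etaA S hi'))
          (ecast (eq_sym (cmp1r (sh S hi))))))))
}.

(* Down-square D: j : X -> Y (top), q : X -> Z (left), i : Z -> W (bottom),
   p : Y -> W (right), a : p j => i q. *)

Definition Bsq (S : Setting) (X Y Z W : sC S) (j : hom X Y) (q : hom X Z)
    (i : hom Z W) (p : hom Y W) (hp : smor (sB S) p) (hq : smor (sB S) q)
    (a : cell (cmp p j) (cmp i q))
  : cell (cmp (us S i) (ps S hp)) (cmp (ps S hq) (us S j)) :=
  vc (hc (i2 (ps S hq)) (ecast (cmp1r (us S j))))
  (vc (hc (i2 (ps S hq)) (hc (i2 (us S j)) (epsB S hp)))
  (vc (hc (i2 (ps S hq)) (ecast (eq_sym (cmpA (us S j) (us S p) (ps S hp)))))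
  (vc (hc (i2 (ps S hq)) (hc (phi (sF S) p j) (i2 (ps S hp))))
  (vc (hc (i2 (ps S hq)) (hc (pb2 (sF S) a) (i2 (ps S hp))))
  (vc (hc (i2 (ps S hq)) (hc (phiI (sF S) i q) (i2 (ps S hp))))
  (vc (hc (i2 (ps S hq)) (ecast (cmpA (us S q) (us S i) (ps S hp))))
  (vc (ecast (eq_sym (cmpA (ps S hq) (us S q) (cmp (us S i) (ps S hp)))))
  (vc (hc (etaB S hq) (i2 (cmp (us S i) (ps S hp))))
      (ecast (eq_sym (cmp1l (cmp (us S i) (ps S hp))))))))))))).

Definition Asq (S : Setting) (X Y Z W : sC S) (j : hom X Y) (q : hom X Z)
    (i : hom Z W) (p : hom Y W) (hi : smor (sA S) i) (hj : smor (sA S) j)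
    (a : cell (cmp p j) (cmp i q))
  : cell (cmp (sh S hj) (us S q)) (cmp (us S p) (sh S hi)) :=
  vc (ecast (cmp1l (cmp (us S p) (sh S hi))))
  (vc (hc (epsA S hj) (i2 (cmp (us S p) (sh S hi))))
  (vc (ecast (cmpA (sh S hj) (us S j) (cmp (us S p) (sh S hi))))
  (vc (hc (i2 (sh S hj)) (ecast (eq_sym (cmpA (us S j) (us S p) (sh S hi)))))
  (vc (hc (i2 (sh S hj)) (hc (phi (sF S) p j) (i2 (sh S hi))))
  (vc (hc (i2 (sh S hj)) (hc (pb2 (sF S) a) (i2 (sh S hi))))
  (vc (hc (i2 (sh S hj)) (hc (phiI (sF S) i q) (i2 (sh S hi))))
  (vc (hc (i2 (sh S hj)) (ecast (cmpA (us S q) (us S i) (sh S hi))))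
  (vc (ecast (eq_sym (cmpA (sh S hj) (us S q) (cmp (us S i) (sh S hi)))))
  (vc (hc (i2 (cmp (sh S hj) (us S q))) (etaA S hi))
      (ecast (eq_sym (cmp1r (cmp (sh S hj) (us S q)))))))))))))).

(* G_D : i_! q_* => p_* j_!, defined from the inverse Binv of B_D
   (i, j in A; p, q in B). It is used only when Binv is a two-sided inverse
   of B_D. *)
Definition Gsq (S : Setting) (X Y Z W : sC S) (j : hom X Y) (q : hom X Z)
    (i : hom Z W) (p : hom Y W) (hi : smor (sA S) i) (hj : smor (sA S) j)
    (hp : smor (sB S) p) (hq : smor (sB S) q)
    (Binv : cell (cmp (ps S hq) (us S j)) (cmp (us S i) (ps S hp)))
  : cell (cmp (sh S hi) (ps S hq)) (cmp (ps S hp) (sh S hj)) :=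
  vc (ecast (cmp1l (cmp (ps S hp) (sh S hj))))
  (vc (hc (epsA S hi) (i2 (cmp (ps S hp) (sh S hj))))
  (vc (ecast (cmpA (sh S hi) (us S i) (cmp (ps S hp) (sh S hj))))
  (vc (hc (i2 (sh S hi)) (ecast (eq_sym (cmpA (us S i) (ps S hp) (sh S hj)))))
  (vc (hc (i2 (sh S hi)) (hc Binv (i2 (sh S hj))))
  (vc (hc (i2 (sh S hi)) (ecast (cmpA (ps S hq) (us S j) (sh S hj))))
  (vc (ecast (eq_sym (cmpA (sh S hi) (ps S hq) (cmp (us S j) (sh S hj)))))
  (vc (hc (i2 (cmp (sh S hi) (ps S hq))) (etaA S hj))
      (ecast (eq_sym (cmp1r (cmp (sh S hi) (ps S hq)))))))))))).

Definition IsInverse (D : Cat2) (X Y : D) (f g : hom X Y) (a : cell f g) (b : cell g f) : Prop :=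
  vc b a = i2 f /\ vc a b = i2 g.
Arguments IsInverse {D X Y f g} a b.
Arguments Bsq S {X Y Z W} j q i p hp hq a.
Arguments Asq S {X Y Z W} j q i p hi hj a.
Arguments Gsq S {X Y Z W} j q i p hi hj hp hq Binv.

From Stdlib Require Import ProofIrrelevance.
Set Implicit Arguments.
Unset Strict Implicit.

(* Every mate is assembled from units, counits and the square
   [θ_D := φ ∘ α^* ∘ φ^-1 : q^* i^* ⇒ j^* p^*] obtained by pulling the 2-cell [α] of a
   down-square back along [(-)^*]: [B_D] is the mate of [θ_D] for [q^* ⊣ q_*] and
   [p^* ⊣ p_*], [A_D] its mate for [j_! ⊣ j^*] and [i_! ⊣ i^*]. Pseudofunctoriality turns
   the 2-commutativity of the cube into the equality of the two pastings of the six [θ]'s.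
   Both sides of the claimed identity are of the form [ε_i' ∘ i'_!(β)j_! ∘ η_j], the
   A-mates disappearing by a triangle identity. Sliding units past counits identifies the
   B-mates of the two pastings with pastings of B-mates, so the two [β]'s agree once [B_K]
   and [B_K'] are cancelled against their inverses.

   Composition of 1-cells is associative only up to propositional equality, so 2-cells are
   compared up to transport along equalities of their boundaries ([heq]), which is plain
   equality for equal boundaries by proof irrelevance. *)

(** * Heterogeneous equality of 2-cells *)

Section CellHeq.
Context {C : Cat2}.

Definition transport_cell (X Y : C) (f g f' g' : hom X Y) (e1 : f = f') (e2 : g = g')
    (a : cell f g) : cell f' g' :=
  match e1 in _ = f1 return cell f1 g' with eq_refl =>
    match e2 in _ = g1 return cell f g1 with eq_refl => a end end.

Definition heq (X Y : C) (f g f' g' : hom X Y) (a : cell f g) (b : cell f' g') : Prop :=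
  exists (e1 : f = f') (e2 : g = g'), transport_cell e1 e2 a = b.

Lemma heq_refl (X Y : C) (f g : hom X Y) (a : cell f g) : heq a a.
Proof. exists eq_refl, eq_refl. reflexivity. Qed.

Lemma heq_sym (X Y : C) (f g f' g' : hom X Y) (a : cell f g) (b : cell f' g') :
  heq a b -> heq b a.
Proof. intros [e1 [e2 E]]. subst f' g'. cbn in E. subst b. apply heq_refl. Qed.

Lemma heq_trans (X Y : C) (f g f' g' f'' g'' : hom X Y)
    (a : cell f g) (b : cell f' g') (c : cell f'' g'') :
  heq a b -> heq b c -> heq a c.
Proof. intros [e1 [e2 E]] [e3 [e4 E']]. subst f' g' f'' g''. cbn in *. subst. apply heq_refl. Qed.

Lemma heq_eq (X Y : C) (f g : hom X Y) (a b : cell f g) : heq a b -> a = b.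
Proof.
  intros [e1 [e2 E]].
  rewrite (proof_irrelevance _ e1 eq_refl), (proof_irrelevance _ e2 eq_refl) in E.
  exact E.
Qed.

Lemma eq_heq (X Y : C) (f g : hom X Y) (a b : cell f g) : a = b -> heq a b.
Proof. intros ->. apply heq_refl. Qed.

Lemma heq_hc (X Y Z : C) (f f' f1 f1' : hom Y Z) (g g' g1 g1' : hom X Y)
    (b : cell f f') (a : cell g g') (b1 : cell f1 f1') (a1 : cell g1 g1') :
  heq b b1 -> heq a a1 -> heq (hc b a) (hc b1 a1).
Proof. intros [e1 [e2 E]] [e3 [e4 E']]. subst. apply heq_refl. Qed.

Lemma heq_i2 (X Y : C) (f f' : hom X Y) : f = f' -> heq (i2 f) (i2 f').
Proof. intros ->. apply heq_refl. Qed.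

Lemma heq_ecast (X Y : C) (f g : hom X Y) (e : f = g) : heq (ecast e) (i2 f).
Proof. destruct e. apply heq_refl. Qed.

End CellHeq.

Definition vce {C : Cat2} {X Y : C} {f g g' h : hom X Y}
    (b : cell g' h) (a : cell f g) (e : g = g') : cell f h :=
  vc b (vc (ecast e) a).

Ltac cell_eq :=
  repeat (first [rewrite cmpA | rewrite cmp1l | rewrite cmp1r]); reflexivity.
Ltac try_cell_eq := try match goal with |- @eq (hom _ _) _ _ => cell_eq end.

Notation "b ;; a" := (vce b a ltac:(cell_eq)) (at level 60, right associativity, only parsing).

Lemma heq_vce {C : Cat2} (X Y : C) (f g g' h f1 g1 g1' h1 : hom X Y)
    (b : cell g' h) (a : cell f g) (e : g = g') (b1 : cell g1' h1) (a1 : cell f1 g1) (e1 : g1 = g1') :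
  heq b b1 -> heq a a1 -> heq (vce b a e) (vce b1 a1 e1).
Proof.
  intros [e2 [e3 Eb]] [e4 [e5 Ea]]. destruct e2, e3, e4, e5. cbn in Eb, Ea. subst b1 a1.
  rewrite (proof_irrelevance _ e1 e). apply heq_refl.
Qed.

Lemma heq_vce_mid {C : Cat2} (X Y : C) (f g g' h h' k g1 h1 : hom X Y)
    (c : cell h' k) (m : cell g' h) (m1 : cell g1 h1) (a : cell f g)
    (e1 : h = h') (e2 : g = g') (e3 : h1 = h') (e4 : g = g1) :
  heq m m1 -> heq (vce c (vce m a e2) e1) (vce c (vce m1 a e4) e3).
Proof.
  intros hm. apply heq_vce; [apply heq_refl | apply heq_vce; [exact hm | apply heq_refl]].
Qed.

Notation Wh L a R := (hc (i2 L) (hc a (i2 R))) (only parsing).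

Lemma heq_whisk {C : Cat2} (X Y Z W : C) (P : hom Z W) (Q : hom X Y) (A A' B B' : hom Y Z)
    (a : cell A A') (b : cell B B') :
  heq a b -> heq (Wh P a Q) (Wh P b Q).
Proof. intros h. apply heq_hc; [apply heq_refl | apply heq_hc; [exact h | apply heq_refl]]. Qed.

Section CellLaws.
Context {C : Cat2} (H : Is2Cat C).

Lemma heq_sandwich (X Y : C) (f f' g g' : hom X Y) (e1 : f' = f) (e2 : g = g') (a : cell f g) :
  heq (vc (ecast e2) (vc a (ecast e1))) a.
Proof. subst. cbn. apply eq_heq. rewrite (v1l H), (v1r H). reflexivity. Qed.

Lemma heq_vc_vce (X Y : C) (f g h : hom X Y) (b : cell g h) (a : cell f g) :
  heq (vc b a) (vce b a eq_refl).
Proof. apply eq_heq. unfold vce. cbn. rewrite (v1l H). reflexivity. Qed.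

Lemma vceA (X Y : C) (f g g' h h' k : hom X Y) (c : cell h' k) (b : cell g' h) (a : cell f g)
    (e1 : h = h') (e2 : g = g') :
  vce c (vce b a e2) e1 = vce (vce c b e1) a e2.
Proof. unfold vce. rewrite !(vA H). reflexivity. Qed.

Lemma heq_vceA (X Y : C) (f g g' h h' k : hom X Y) (c : cell h' k) (b : cell g' h) (a : cell f g)
    (e1 : h = h') (e2 : g = g') :
  heq (vce (vce c b e1) a e2) (vce c (vce b a e2) e1).
Proof. rewrite vceA. apply heq_refl. Qed.

Lemma heq_vce_i2l (X Y : C) (f g g' : hom X Y) (a : cell f g) (e : g = g') :
  heq (vce (i2 g') a e) a.
Proof. subst. apply eq_heq. unfold vce. cbn. rewrite !(v1l H). reflexivity. Qed.

Lemma heq_vce_i2r (X Y : C) (f f' h : hom X Y) (b : cell f' h) (e : f = f') :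
  heq (vce b (i2 f) e) b.
Proof. subst. unfold vce. cbn. apply eq_heq. rewrite !(v1l H), (v1r H). reflexivity. Qed.

Lemma heq_hc_i2 (X Y Z : C) (f : hom Y Z) (g : hom X Y) :
  heq (hc (i2 f) (i2 g)) (i2 (cmp f g)).
Proof. apply eq_heq. apply (hc_1 H). Qed.

Lemma heq_whiskl_vce (X Y Z : C) (f : hom Y Z) (g h h' k : hom X Y)
    (b : cell h' k) (a : cell g h) (e : h = h') :
  heq (hc (i2 f) (vce b a e)) (vce (hc (i2 f) b) (hc (i2 f) a) (f_equal (cmp f) e)).
Proof.
  subst. apply eq_heq. unfold vce. cbn.
  rewrite !(v1l H), <- (hc_v H), (v1l H). reflexivity.
Qed.

Lemma heq_whiskr_vce (X Y Z : C) (g : hom X Y) (f h h' k : hom Y Z)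
    (b : cell h' k) (a : cell f h) (e : h = h') :
  heq (hc (vce b a e) (i2 g)) (vce (hc b (i2 g)) (hc a (i2 g)) (f_equal (fun u => cmp u g) e)).
Proof.
  subst. apply eq_heq. unfold vce. cbn.
  rewrite !(v1l H), <- (hc_v H), (v1l H). reflexivity.
Qed.

Lemma heq_hcA (X Y Z W : C) (h h' : hom Z W) (g g' : hom Y Z) (f f' : hom X Y)
    (c : cell h h') (b : cell g g') (a : cell f f') :
  heq (hc c (hc b a)) (hc (hc c b) a).
Proof. rewrite (hcA H). apply heq_sandwich. Qed.

Lemma heq_whiskl_whiskr (X Y Z W : C) (h : hom Z W) (g g' : hom Y Z) (f : hom X Y) (b : cell g g') :
  heq (hc (hc (i2 h) b) (i2 f)) (hc (i2 h) (hc b (i2 f))).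
Proof. apply heq_sym, heq_hcA. Qed.

Lemma heq_whiskl_whiskl (X Y Z W : C) (h : hom Z W) (g : hom Y Z) (f f' : hom X Y) (a : cell f f') :
  heq (hc (i2 h) (hc (i2 g) a)) (hc (i2 (cmp h g)) a).
Proof. eapply heq_trans; [apply heq_hcA | apply heq_hc; [apply heq_hc_i2 | apply heq_refl]]. Qed.

Lemma heq_whiskr_whiskr (X Y Z W : C) (h h' : hom Z W) (g : hom Y Z) (f : hom X Y) (a : cell h h') :
  heq (hc (hc a (i2 g)) (i2 f)) (hc a (i2 (cmp g f))).
Proof.
  eapply heq_trans; [apply heq_sym, heq_hcA | apply heq_hc; [apply heq_refl | apply heq_hc_i2]].
Qed.

Lemma heq_whiskl_idm (X Y : C) (f f' : hom X Y) (a : cell f f') : heq (hc (i2 (idm Y)) a) a.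
Proof. rewrite (hc1l H). apply heq_sandwich. Qed.

Lemma heq_whiskr_idm (X Y : C) (f f' : hom X Y) (a : cell f f') : heq (hc a (i2 (idm X))) a.
Proof. rewrite (hc1r H). apply heq_sandwich. Qed.

Lemma interchange (X Y Z : C) (f f' : hom Y Z) (g g' : hom X Y) (a : cell f f') (b : cell g g') :
  vc (hc (i2 f') b) (hc a (i2 g)) = hc a b /\ vc (hc a (i2 g')) (hc (i2 f) b) = hc a b.
Proof. split; rewrite <- (hc_v H), (v1l H), (v1r H); reflexivity. Qed.

Lemma heq_interchange_lr (X Y Z : C) (f f' : hom Y Z) (g g' : hom X Y) (a : cell f f') (b : cell g g')
    (P1 Q1 Q2 R2 : hom X Z) (u : cell P1 Q1) (v : cell Q2 R2) (e : Q1 = Q2) :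
  heq u (hc a (i2 g)) -> heq v (hc (i2 f') b) ->
  heq (vce v u e) (vce (hc a (i2 g')) (hc (i2 f) b) eq_refl).
Proof.
  intros [e1 [e2 Eu]] [e3 [e4 Ev]]. subst P1 Q1 Q2 R2.
  rewrite (proof_irrelevance _ e3 eq_refl) in Ev. cbn in Eu, Ev. subst u v. apply eq_heq. unfold vce. cbn.
  rewrite !(v1l H). destruct (interchange a b) as [-> ->]. reflexivity.
Qed.

Lemma heq_interchange_rl (X Y Z : C) (f f' : hom Y Z) (g g' : hom X Y) (a : cell f f') (b : cell g g')
    (P1 Q1 Q2 R2 : hom X Z) (u : cell P1 Q1) (v : cell Q2 R2) (e : Q1 = Q2) :
  heq u (hc (i2 f) b) -> heq v (hc a (i2 g')) ->
  heq (vce v u e) (vce (hc (i2 f') b) (hc a (i2 g)) eq_refl).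
Proof.
  intros [e1 [e2 Eu]] [e3 [e4 Ev]]. subst P1 Q1 Q2 R2.
  rewrite (proof_irrelevance _ e3 eq_refl) in Ev. cbn in Eu, Ev. subst u v. apply eq_heq. unfold vce. cbn.
  rewrite !(v1l H). destruct (interchange a b) as [-> ->]. reflexivity.
Qed.

Lemma heq_insert_iso (X Y : C) (f g h : hom X Y) (a : cell g h) (a' : cell h g) (u : cell f g) :
  vc a' a = i2 g -> heq u (vc a' (vc a u)).
Proof. intros Ha. apply eq_heq. rewrite (vA H), Ha, (v1l H). reflexivity. Qed.

End CellLaws.

#[global] Opaque vce.

Lemma heq_window {C : Cat2} (X Y : C) (f g g' h h1 P0 P1 Q0 : hom X Y)
    (P : cell P0 P1) (Q : cell Q0 h1) (u : cell g' h) (r : cell f g) (e : g = g') (E : g = Q0)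
    (F : heq P Q) (Hu : heq u P) :
  heq (vce u r e) (vce Q r E).
Proof. apply heq_vce; [eapply heq_trans; eassumption | apply heq_refl]. Qed.
Arguments heq_window {C X Y f g g' h h1 P0 P1 Q0 P Q u r e E} F Hu.

(** * Normalisation of pasting composites *)

(* [nf] rewrites a pasting composite into a right-nested [vce]-chain of whiskered
   generators, dropping all coherence casts. *)
Ltac nf_chain H :=
  lazymatch goal with |- heq ?T _ =>
  lazymatch T with
  | vce (i2 _) _ _ => simple eapply (heq_vce_i2l H)
  | vce _ (i2 _) _ => simple eapply (heq_vce_i2r H)
  | vce (vce _ _ _) _ _ => eapply heq_trans;
       [ simple eapply (heq_vceA H) | simple eapply heq_vce; [ simple eapply heq_refl | nf_chain H ] ]
  | _ => simple eapply heq_refl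
  end end.

Ltac nf_hc H :=
  lazymatch goal with |- heq ?T _ =>
  lazymatch T with
  | hc (i2 (idm _)) _ => simple eapply (heq_whiskl_idm H)
  | hc _ (i2 (idm _)) => simple eapply (heq_whiskr_idm H)
  | hc (i2 _) (i2 _) => simple eapply (heq_hc_i2 H)
  | hc (i2 _) (vce _ _ _) => eapply heq_trans;
       [ simple eapply (heq_whiskl_vce H) | simple eapply heq_vce; [ nf_hc H | nf_hc H ] ]
  | hc (vce _ _ _) (i2 _) => eapply heq_trans;
       [ simple eapply (heq_whiskr_vce H) | simple eapply heq_vce; [ nf_hc H | nf_hc H ] ]
  | hc (i2 _) (hc (i2 _) _) => eapply heq_trans; [ simple eapply (heq_whiskl_whiskl H) | nf_hc H ]
  | hc (hc _ (i2 _)) (i2 _) => eapply heq_trans; [ simple eapply (heq_whiskr_whiskr H) | nf_hc H ]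
  | hc (hc (i2 _) _) (i2 _) => eapply heq_trans;
       [ simple eapply (heq_whiskl_whiskr H) | simple eapply heq_hc; [ simple eapply heq_refl | nf_hc H ] ]
  | _ => simple eapply heq_refl
  end end.

Ltac nf H :=
  lazymatch goal with |- heq ?T _ =>
  lazymatch T with
  | vc _ _ => eapply heq_trans; [ simple eapply (heq_vc_vce H) | nf H ]
  | vce _ _ _ => eapply heq_trans; [ simple eapply heq_vce; [ nf H | nf H ] | nf_chain H ]
  | hc _ _ => eapply heq_trans; [ simple eapply heq_hc; [ nf H | nf H ] | nf_hc H ]
  | ecast _ => simple eapply heq_ecast
  | _ => simple eapply heq_refl
  end end.

Ltac hcong :=
  first [ simple eapply heq_refl
        | simple eapply heq_vce; hcong
        | simple eapply heq_hc; hcong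
        | simple eapply heq_i2; cell_eq ].

Ltac hnorm H := unshelve (eapply heq_trans; [ nf H | ]); try_cell_eq.

Ltac hsolve H :=
  unshelve (eapply heq_trans; [ nf H | apply heq_sym; eapply heq_trans; [ nf H | apply heq_sym; hcong ] ]);
  try_cell_eq.

Ltac chain_at n T := lazymatch n with
  | 0 => T
  | S ?m => simple eapply heq_vce; [ simple eapply heq_refl | chain_at m T ] end.

(* Factors of a normalised chain are numbered from the outermost one, starting at 0.
   [replace_at H n k F] rewrites the [k] factors from position [n] on with [F] ([k = 0]:
   all of them); [slide_at H n dir a b] exchanges factors [n] and [n+1] by interchange. *)
Ltac at_factor n T := unshelve (eapply heq_trans; [ chain_at n T | ]); try_cell_eq.

Ltac group_factors H k := lazymatch k with
  | 1 => idtac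
  | S ?m => rewrite (vceA H); group_factors H m end.

Ltac replace_at H n k F :=
  lazymatch k with
  | 0 => at_factor n ltac:(refine (heq_trans _ F); hsolve H)
  | _ => at_factor n ltac:(group_factors H k; simple eapply (heq_window F); hsolve H)
  end;
  hnorm H.

Ltac slide_at H n dir a b :=
  let L := lazymatch dir with
    | 0 => open_constr:(@heq_interchange_lr _ H _ _ _ _ _ _ _ a b)
    | 1 => open_constr:(@heq_interchange_rl _ H _ _ _ _ _ _ _ a b) end in
  at_factor n ltac:(first [ group_factors H 2; simple eapply (heq_window (heq_refl _));
                            simple eapply L; hsolve H
                          | simple eapply L; hsolve H ]);
  hnorm H.

(** * Mates in a 2-category *)

(* 1-cells of [D] are named after the paper: [Lq = q^*], [Rq = q_*], [Li = i_!],
   [Ri = i^*]; in [MateCube], [x] stands for [x^*] and [θK] for [θ_K]. *)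
Section Mates.
Context {D : Cat2}.

Definition Bmate {a b c d : D} (Rq : hom a c) (Lq : hom c a) (ηq : cell (idm c) (cmp Rq Lq))
    (Lp : hom d b) (Rp : hom b d) (εp : cell (cmp Lp Rp) (idm b)) (Bi : hom d c) (Tj : hom b a)
    (θ : cell (cmp Lq Bi) (cmp Tj Lp)) : cell (cmp Bi Rp) (cmp Rq Tj) :=
  vc (hc (i2 Rq) (ecast (cmp1r Tj)))
  (vc (hc (i2 Rq) (hc (i2 Tj) εp))
  (vc (hc (i2 Rq) (ecast (eq_sym (cmpA Tj Lp Rp))))
  (vc (hc (i2 Rq) (hc θ (i2 Rp)))
  (vc (hc (i2 Rq) (ecast (cmpA Lq Bi Rp)))
  (vc (ecast (eq_sym (cmpA Rq Lq (cmp Bi Rp))))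
  (vc (hc ηq (i2 (cmp Bi Rp)))
      (ecast (eq_sym (cmp1l (cmp Bi Rp)))))))))).

Definition Amate {a b c d : D} (Lj : hom a b) (Rj : hom b a) (εj : cell (cmp Lj Rj) (idm b))
    (Li : hom c d) (Ri : hom d c) (ηi : cell (idm c) (cmp Ri Li)) (Tq : hom c a) (Bp : hom d b)
    (θ : cell (cmp Tq Ri) (cmp Rj Bp)) : cell (cmp Lj Tq) (cmp Bp Li) :=
  vc (ecast (cmp1l (cmp Bp Li)))
  (vc (hc εj (i2 (cmp Bp Li)))
  (vc (ecast (cmpA Lj Rj (cmp Bp Li)))
  (vc (hc (i2 Lj) (ecast (eq_sym (cmpA Rj Bp Li))))
  (vc (hc (i2 Lj) (hc θ (i2 Li)))
  (vc (hc (i2 Lj) (ecast (cmpA Tq Ri Li)))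
  (vc (ecast (eq_sym (cmpA Lj Tq (cmp Ri Li))))
  (vc (hc (i2 (cmp Lj Tq)) ηi)
      (ecast (eq_sym (cmp1r (cmp Lj Tq))))))))))).

Definition Gmate {a b c d : D} (Li : hom c d) (Ri : hom d c) (εi : cell (cmp Li Ri) (idm d))
    (Lj : hom a b) (Rj : hom b a) (ηj : cell (idm a) (cmp Rj Lj)) (Rq : hom a c) (Rp : hom b d)
    (β : cell (cmp Rq Rj) (cmp Ri Rp)) : cell (cmp Li Rq) (cmp Rp Lj) :=
  vc (ecast (cmp1l (cmp Rp Lj)))
  (vc (hc εi (i2 (cmp Rp Lj)))
  (vc (ecast (cmpA Li Ri (cmp Rp Lj)))
  (vc (hc (i2 Li) (ecast (eq_sym (cmpA Ri Rp Lj))))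
  (vc (hc (i2 Li) (hc β (i2 Lj)))
  (vc (hc (i2 Li) (ecast (cmpA Rq Rj Lj)))
  (vc (ecast (eq_sym (cmpA Li Rq (cmp Rj Lj))))
  (vc (hc (i2 (cmp Li Rq)) ηj)
      (ecast (eq_sym (cmp1r (cmp Li Rq))))))))))).

Hypothesis HD : Is2Cat D.

Lemma triangle_l (X Y : D) (L : hom X Y) (R : hom Y X) η ε :
  IsAdj L R η ε -> heq (hc ε (i2 L) ;; hc (i2 L) η) (i2 L).
Proof. intros [T _]. eapply heq_trans; [| apply eq_heq; exact T]. hsolve HD. Qed.

Lemma triangle_r (X Y : D) (L : hom X Y) (R : hom Y X) η ε :
  IsAdj L R η ε -> heq (hc (i2 R) ε ;; hc η (i2 R)) (i2 R).
Proof. intros [_ T]. eapply heq_trans; [| apply eq_heq; exact T]. hsolve HD. Qed.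

End Mates.

Section MateCube.
Context {D : Cat2} (HD : Is2Cat D) (X' Y' Z' W' X Y Z W : D).
Context (Li' : hom Z' W') (Ri' : hom W' Z') (Lj' : hom X' Y') (Rj' : hom Y' X')
        (Li : hom Z W) (Ri : hom W Z) (Lj : hom X Y) (Rj : hom Y X)
        (ηi : cell (idm Z) (cmp Ri Li)) (εi : cell (cmp Li Ri) (idm W)) (εi' : cell (cmp Li' Ri') (idm W'))
        (ηj : cell (idm X) (cmp Rj Lj)) (ηj' : cell (idm X') (cmp Rj' Lj')) (εj' : cell (cmp Lj' Rj') (idm Y'))
        (AI : IsAdj Li Ri ηi εi) (AJ' : IsAdj Lj' Rj' ηj' εj').
Context (Rq' : hom X' Z') (Lq' : hom Z' X') (Rp' : hom Y' W') (Lp' : hom W' Y')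
        (Rq : hom X Z) (Lq : hom Z X) (Rp : hom Y W) (Lp : hom W Y)
        (ηq : cell (idm Z) (cmp Rq Lq)) (εq : cell (cmp Lq Rq) (idm X)) (ηq' : cell (idm Z') (cmp Rq' Lq'))
        (ηp' : cell (idm W') (cmp Rp' Lp')) (εp' : cell (cmp Lp' Rp') (idm Y')) (εp : cell (cmp Lp Rp) (idm Y))
        (AQ : IsAdj Lq Rq ηq εq) (AP' : IsAdj Lp' Rp' ηp' εp').
Context (x : hom X X') (y : hom Y Y') (z : hom Z Z') (w : hom W W')
        (θI : cell (cmp Lp' w) (cmp y Lp)) (θI' : cell (cmp Lq' z) (cmp x Lq))
        (θJ : cell (cmp z Ri) (cmp Ri' w)) (θJ' : cell (cmp x Rj) (cmp Rj' y))
        (θK : cell (cmp Lq Ri) (cmp Rj Lp)) (θK' : cell (cmp Lq' Ri') (cmp Rj' Lp')).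

(* Pasted B-mates are the B-mate of the pasting: slide the unit of [q'] and the counit
   of [p] outwards, then cancel the inner unit and counit by a triangle identity. *)
Lemma Bmate_pasting_bottom :
  heq (hc (i2 Rq') θJ' ;; hc (Bmate ηq' εq θI') (i2 Rj) ;; hc (i2 z) (Bmate ηq εp θK))
      (hc (i2 (cmp Rq' (cmp Rj' y))) εp ;;
       Wh Rq' (hc θJ' (i2 Lp) ;; hc (i2 x) θK ;; hc θI' (i2 Ri)) Rp ;;
       hc ηq' (i2 (cmp z (cmp Ri Rp)))).
Proof.
  unfold Bmate. hnorm HD.
  slide_at HD 3 1 ηq' (hc (i2 (cmp z (cmp Rq Rj))) εp).
  slide_at HD 4 1 ηq' (hc (i2 (cmp z Rq)) (hc θK (i2 Rp))).
  slide_at HD 5 1 ηq' (hc (i2 z) (hc ηq (i2 (cmp Ri Rp)))).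
  slide_at HD 2 1 (hc (i2 Rq') θI') (hc (i2 (cmp Rq Rj)) εp).
  slide_at HD 3 1 (hc (i2 Rq') θI') (hc (i2 Rq) (hc θK (i2 Rp))).
  slide_at HD 4 1 (hc (i2 Rq') θI') (hc ηq (i2 (cmp Ri Rp))).
  slide_at HD 1 1 (hc (i2 (cmp Rq' x)) εq) (hc (i2 Rj) εp).
  slide_at HD 2 1 (hc (i2 (cmp Rq' x)) εq) (hc θK (i2 Rp)).
  replace_at HD 3 2 (heq_whisk (cmp Rq' x) (cmp Ri Rp) (triangle_l HD AQ)).
  slide_at HD 0 1 (hc (i2 Rq') θJ') εp.
  hsolve HD.
Qed.

Lemma Bmate_pasting_top :
  heq (hc (Bmate ηq' εp' θK') (i2 y) ;; hc (i2 Ri') (Bmate ηp' εp θI) ;; hc θJ (i2 Rp))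
      (hc (i2 (cmp Rq' (cmp Rj' y))) εp ;;
       Wh Rq' (hc (i2 Rj') θI ;; hc θK' (i2 w) ;; hc (i2 Lq') θJ) Rp ;;
       hc ηq' (i2 (cmp z (cmp Ri Rp)))).
Proof.
  unfold Bmate. hnorm HD.
  slide_at HD 2 1 ηq' (hc (i2 (cmp Ri' (cmp Rp' y))) εp).
  slide_at HD 3 1 ηq' (hc (i2 (cmp Ri' Rp')) (hc θI (i2 Rp))).
  slide_at HD 4 1 ηq' (hc (i2 Ri') (hc ηp' (i2 (cmp w Rp)))).
  slide_at HD 5 1 ηq' (hc θJ (i2 Rp)).
  slide_at HD 1 1 (hc (i2 Rq') θK') (hc (i2 (cmp Rp' y)) εp).
  slide_at HD 2 1 (hc (i2 Rq') θK') (hc (i2 Rp') (hc θI (i2 Rp))).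
  slide_at HD 3 1 (hc (i2 Rq') θK') (hc ηp' (i2 (cmp w Rp))).
  slide_at HD 0 1 (hc (i2 (cmp Rq' Rj')) εp') (hc (i2 y) εp).
  slide_at HD 1 1 (hc (i2 (cmp Rq' Rj')) εp') (hc θI (i2 Rp)).
  replace_at HD 2 2 (heq_whisk (cmp Rq' Rj') (cmp w Rp) (triangle_l HD AP')).
  hsolve HD.
Qed.

Hypothesis cube : heq (hc θJ' (i2 Lp) ;; hc (i2 x) θK ;; hc θI' (i2 Ri))
                      (hc (i2 Rj') θI ;; hc θK' (i2 w) ;; hc (i2 Lq') θJ).

Lemma Bmate_cube :
  heq (hc (i2 Rq') θJ' ;; hc (Bmate ηq' εq θI') (i2 Rj) ;; hc (i2 z) (Bmate ηq εp θK))
      (hc (Bmate ηq' εp' θK') (i2 y) ;; hc (i2 Ri') (Bmate ηp' εp θI) ;; hc θJ (i2 Rp)).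
Proof.
  eapply heq_trans; [apply Bmate_pasting_bottom | eapply heq_trans; [| apply heq_sym, Bmate_pasting_top]].
  apply heq_vce_mid, heq_whisk, cube.
Qed.

Context (Kinv : cell (cmp Rq Rj) (cmp Ri Rp)) (K'inv : cell (cmp Rq' Rj') (cmp Ri' Rp')).
Hypothesis HKinv : IsInverse (Bmate ηq εp θK) Kinv.
Hypothesis HK'inv : IsInverse (Bmate ηq' εp' θK') K'inv.

Lemma Bmate_cube_inv :
  heq (hc K'inv (i2 y) ;; hc (i2 Rq') θJ' ;; hc (Bmate ηq' εq θI') (i2 Rj))
      (hc (i2 Ri') (Bmate ηp' εp θI) ;; hc θJ (i2 Rp) ;; hc (i2 z) Kinv).
Proof.
  pose proof HKinv as [_ KinvK]. pose proof HK'inv as [K'K'inv _]. unfold Bmate in KinvK, K'K'inv.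
  apply heq_trans with (b := hc K'inv (i2 y) ;;
      (hc (i2 Rq') θJ' ;; hc (Bmate ηq' εq θI') (i2 Rj) ;; hc (i2 z) (Bmate ηq εp θK)) ;;
      hc (i2 z) Kinv).
  { apply heq_sym. unfold Bmate. hnorm HD.
    replace_at HD 5 0 (heq_hc (heq_refl (i2 z)) (eq_heq KinvK)).
    hsolve HD. }
  apply heq_trans with (b := hc K'inv (i2 y) ;;
      (hc (Bmate ηq' εp' θK') (i2 y) ;; hc (i2 Ri') (Bmate ηp' εp θI) ;; hc θJ (i2 Rp)) ;;
      hc (i2 z) Kinv).
  { apply heq_vce_mid, Bmate_cube. }
  unfold Bmate. hnorm HD.
  replace_at HD 0 4 (heq_hc (eq_heq K'K'inv) (heq_refl (i2 y))).
  hsolve HD.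
Qed.

(* Both composites of the theorem are the G-mate conjugation [ε_{i'} ∘ i'_!(-)j_! ∘ η_j]
   of a composite of B-mates; the A-mates disappear by a triangle identity. *)
Lemma AGB_conj :
  heq (vc (hc (i2 Rp') (Amate εj' ηj θJ'))
      (vc (ecast (eq_sym (cmpA Rp' Lj' x)))
      (vc (hc (Gmate εi' ηj' K'inv) (i2 x))
      (vc (ecast (cmpA Li' Rq' x))
          (hc (i2 Li') (Bmate ηq' εq θI'))))))
      (hc εi' (i2 (cmp Rp' (cmp y Lj))) ;;
       Wh Li' (hc K'inv (i2 y) ;; hc (i2 Rq') θJ' ;; hc (Bmate ηq' εq θI') (i2 Rj)) Lj ;;
       hc (i2 (cmp Li' (cmp z Rq))) ηj).
Proof.
  unfold Bmate, Amate, Gmate. hnorm HD.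
  slide_at HD 2 0 (hc εi' (i2 (cmp Rp' (cmp Lj' x)))) ηj.
  slide_at HD 3 0 (hc (i2 Li') (hc K'inv (i2 (cmp Lj' x)))) ηj.
  slide_at HD 4 0 (hc (i2 (cmp Li' Rq')) (hc ηj' (i2 x))) ηj.
  slide_at HD 5 0 (hc (i2 (cmp Li' (cmp Rq' x))) εq) ηj.
  slide_at HD 6 0 (hc (i2 (cmp Li' Rq')) (hc θI' (i2 Rq))) ηj.
  slide_at HD 7 0 (hc (i2 Li') (hc ηq' (i2 (cmp z Rq)))) ηj.
  slide_at HD 1 0 εi' (hc (i2 (cmp Rp' Lj')) (hc θJ' (i2 Lj))).
  slide_at HD 0 0 εi' (hc (i2 Rp') (hc εj' (i2 (cmp y Lj)))).
  slide_at HD 2 0 (hc (i2 Li') K'inv) (hc (i2 Lj') (hc θJ' (i2 Lj))).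
  slide_at HD 1 0 (hc (i2 Li') K'inv) (hc εj' (i2 (cmp y Lj))).
  slide_at HD 3 0 (hc (i2 (cmp Li' Rq')) ηj') (hc θJ' (i2 Lj)).
  replace_at HD 2 2 (heq_whisk (cmp Li' Rq') (cmp y Lj) (triangle_r HD AJ')).
  hsolve HD.
Qed.

Lemma BGA_conj :
  heq (vc (ecast (eq_sym (cmpA Rp' y Lj)))
      (vc (hc (Bmate ηp' εp θI) (i2 Lj))
      (vc (ecast (cmpA w Rp Lj))
      (vc (hc (i2 w) (Gmate εi ηj Kinv))
      (vc (ecast (eq_sym (cmpA w Li Rq)))
      (vc (hc (Amate εi' ηi θJ) (i2 Rq))
          (ecast (cmpA Li' z Rq))))))))
      (hc εi' (i2 (cmp Rp' (cmp y Lj))) ;;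
       Wh Li' (hc (i2 Ri') (Bmate ηp' εp θI) ;; hc θJ (i2 Rp) ;; hc (i2 z) Kinv) Lj ;;
       hc (i2 (cmp Li' (cmp z Rq))) ηj).
Proof.
  unfold Bmate, Amate, Gmate. hnorm HD.
  slide_at HD 5 0 εi' (hc (i2 (cmp w (cmp Li Rq))) ηj).
  slide_at HD 4 0 εi' (hc (i2 (cmp w Li)) (hc Kinv (i2 Lj))).
  slide_at HD 3 0 εi' (hc (i2 w) (hc εi (i2 (cmp Rp Lj)))).
  slide_at HD 2 0 εi' (hc ηp' (i2 (cmp w (cmp Rp Lj)))).
  slide_at HD 1 0 εi' (hc (i2 Rp') (hc θI (i2 (cmp Rp Lj)))).
  slide_at HD 0 0 εi' (hc (i2 (cmp Rp' y)) (hc εp (i2 Lj))).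
  slide_at HD 6 0 (hc (i2 Li') θJ) (hc (i2 (cmp Li Rq)) ηj).
  slide_at HD 5 0 (hc (i2 Li') θJ) (hc (i2 Li) (hc Kinv (i2 Lj))).
  slide_at HD 4 0 (hc (i2 Li') θJ) (hc εi (i2 (cmp Rp Lj))).
  slide_at HD 7 0 (hc (i2 (cmp Li' z)) ηi) (hc (i2 Rq) ηj).
  slide_at HD 6 0 (hc (i2 (cmp Li' z)) ηi) (hc Kinv (i2 Lj)).
  replace_at HD 5 2 (heq_whisk (cmp Li' z) (cmp Rp Lj) (triangle_r HD AI)).
  hsolve HD.
Qed.

Lemma mate_cube :
  vc (hc (i2 Rp') (Amate εj' ηj θJ'))
      (vc (ecast (eq_sym (cmpA Rp' Lj' x)))
      (vc (hc (Gmate εi' ηj' K'inv) (i2 x))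
      (vc (ecast (cmpA Li' Rq' x))
          (hc (i2 Li') (Bmate ηq' εq θI')))))
  =
  vc (ecast (eq_sym (cmpA Rp' y Lj)))
      (vc (hc (Bmate ηp' εp θI) (i2 Lj))
      (vc (ecast (cmpA w Rp Lj))
      (vc (hc (i2 w) (Gmate εi ηj Kinv))
      (vc (ecast (eq_sym (cmpA w Li Rq)))
      (vc (hc (Amate εi' ηi θJ) (i2 Rq))
          (ecast (cmpA Li' z Rq))))))).
Proof.
  apply heq_eq.
  eapply heq_trans; [apply AGB_conj | eapply heq_trans; [| apply heq_sym, BGA_conj]].
  apply heq_vce_mid, heq_whisk, Bmate_cube_inv.
Qed.

End MateCube.

(** * Pulling squares back along the pseudofunctor *)

Section PullbackSquares.
Context {C D : Cat2} {P0 : C -> D} (F : @PsContra C D P0) (HF : PsContraLaws F) (HD : Is2Cat D).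

Lemma pb2_ecast (X Y : C) (f g : hom X Y) (e : f = g) :
  pb2 F (ecast e) = ecast (f_equal (pb F) (eq_sym e)).
Proof. destruct e. apply (pb2_1 HF). Qed.

Lemma pb2_hc (X Y Z : C) (g g' : hom Y Z) (f f' : hom X Y) (b : cell g g') (a : cell f f') :
  pb2 F (hc b a) = vc (phiI F g f) (vc (hc (pb2 F a) (pb2 F b)) (phi F g' f')).
Proof. rewrite <- (phi_nat HF), (vA HD), (phi_iso1 HF), (v1l HD). reflexivity. Qed.

Lemma heq_phi_assoc (X Y Z W : C) (h : hom Z W) (g : hom Y Z) (f : hom X Y) :
  heq (hc (i2 (pb F f)) (phi F h g) ;; phi F (cmp h g) f)
      (hc (phi F g f) (i2 (pb F h)) ;; phi F h (cmp g f)).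
Proof.
  pose proof (eq_heq (phi_assoc HF h g f)) as E.
  eapply heq_trans; [| eapply heq_trans; [apply heq_sym, E |]]; hsolve HD.
Qed.

Lemma whiskl_phi_iso1 (X Y Z W : C) (h : hom Z W) (g : hom Y Z) (f : hom X Y) :
  vc (hc (i2 (pb F f)) (phiI F h g)) (hc (i2 (pb F f)) (phi F h g)) = i2 _.
Proof. rewrite <- (hc_v HD), (phi_iso1 HF), (v1l HD), (hc_1 HD). reflexivity. Qed.

Lemma whiskr_phi_iso1 (X Y Z W : C) (h : hom Z W) (g : hom Y Z) (f : hom X Y) :
  vc (hc (phiI F g f) (i2 (pb F h))) (hc (phi F g f) (i2 (pb F h))) = i2 _.
Proof. rewrite <- (hc_v HD), (phi_iso1 HF), (v1l HD), (hc_1 HD). reflexivity. Qed.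

Lemma phi_phiI_assoc (X Y Z W : C) (h : hom Z W) (g : hom Y Z) (f : hom X Y) :
  heq (vce (phi F (cmp h g) f) (phiI F h (cmp g f)) (f_equal (pb F) (cmpA h g f)))
      (hc (i2 (pb F f)) (phiI F h g) ;; hc (phi F g f) (i2 (pb F h))).
Proof.
  hnorm HD.
  replace_at HD 0 1 (heq_insert_iso HD (phi F (cmp h g) f) (whiskl_phi_iso1 h g f)).
  replace_at HD 1 2 (heq_phi_assoc h g f).
  replace_at HD 2 0 (eq_heq (phi_iso2 HF h (cmp g f))).
  hsolve HD.
Qed.

Lemma phi_phiI_assoc_sym (X Y Z W : C) (h : hom Z W) (g : hom Y Z) (f : hom X Y) :
  heq (vce (phi F h (cmp g f)) (phiI F (cmp h g) f) (eq_sym (f_equal (pb F) (cmpA h g f))))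
      (hc (phiI F g f) (i2 (pb F h)) ;; hc (i2 (pb F f)) (phi F h g)).
Proof.
  hnorm HD.
  replace_at HD 0 1 (heq_insert_iso HD (phi F h (cmp g f)) (whiskr_phi_iso1 h g f)).
  replace_at HD 1 2 (heq_sym (heq_phi_assoc h g f)).
  replace_at HD 2 0 (eq_heq (phi_iso2 HF (cmp h g) f)).
  hsolve HD.
Qed.

Definition pb_square (X Y Z W : C) (j : hom X Y) (q : hom X Z) (i : hom Z W) (p : hom Y W)
    (a : cell (cmp p j) (cmp i q)) : cell (cmp (pb F q) (pb F i)) (cmp (pb F j) (pb F p)) :=
  vc (phi F p j) (vc (pb2 F a) (phiI F i q)).

Context (X' Y' Z' W' X Y Z W : C)
    (j' : hom X' Y') (i' : hom Z' W') (j : hom X Y) (i : hom Z W)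
    (q' : hom X' Z') (p' : hom Y' W') (q : hom X Z) (p : hom Y W)
    (x : hom X' X) (y : hom Y' Y) (z : hom Z' Z) (w : hom W' W)
    (I : cell (cmp p y) (cmp w p')) (I' : cell (cmp q x) (cmp z q'))
    (J : cell (cmp w i') (cmp i z)) (J' : cell (cmp y j') (cmp j x))
    (K : cell (cmp p j) (cmp i q)) (K' : cell (cmp p' j') (cmp i' q')).

Definition paste_via_top : cell (cmp (cmp p y) j') (cmp (cmp i z) q') :=
  vc (hc J (i2 q')) (vc (ecast (cmpA w i' q')) (vc (hc (i2 w) K')
    (vc (ecast (eq_sym (cmpA w p' j'))) (hc I (i2 j'))))).

Definition paste_via_bottom : cell (cmp (cmp p y) j') (cmp (cmp i z) q') :=
  vc (ecast (cmpA i z q')) (vc (hc (i2 i) I') (vc (ecast (eq_sym (cmpA i q x)))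
    (vc (hc K (i2 x)) (vc (ecast (cmpA p j x)) (vc (hc (i2 p) J')
      (ecast (eq_sym (cmpA p y j')))))))).

Lemma pb_paste_via_top :
  heq (hc (i2 (pb F j')) (phi F p y) ;; phi F (cmp p y) j' ;; pb2 F paste_via_top ;;
       phiI F (cmp i z) q' ;; hc (i2 (pb F q')) (phiI F i z))
      (hc (i2 (pb F j')) (pb_square I) ;; hc (pb_square K') (i2 (pb F w)) ;;
       hc (i2 (pb F q')) (pb_square J)).
Proof.
  unfold paste_via_top.
  rewrite !(pb2_v HF), !pb2_ecast, !pb2_hc, !(pb2_1 HF).
  unfold pb_square. hnorm HD.
  replace_at HD 10 2 (eq_heq (phi_iso2 HF (cmp i z) q')).
  replace_at HD 7 2 (phi_phiI_assoc_sym w i' q').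
  replace_at HD 4 2 (phi_phiI_assoc w p' j').
  replace_at HD 1 2 (eq_heq (phi_iso2 HF (cmp p y) j')).
  hsolve HD.
Qed.

Lemma pb_paste_via_bottom :
  heq (hc (i2 (pb F j')) (phi F p y) ;; phi F (cmp p y) j' ;; pb2 F paste_via_bottom ;;
       phiI F (cmp i z) q' ;; hc (i2 (pb F q')) (phiI F i z))
      (hc (pb_square J') (i2 (pb F p)) ;; hc (i2 (pb F x)) (pb_square K) ;;
       hc (pb_square I') (i2 (pb F i))).
Proof.
  unfold paste_via_bottom.
  rewrite !(pb2_v HF), !pb2_ecast, !pb2_hc, !(pb2_1 HF).
  unfold pb_square. hnorm HD.
  replace_at HD 10 2 (phi_phiI_assoc_sym i z q').
  replace_at HD 11 0 (heq_whisk (pb F q') (idm _) (eq_heq (phi_iso2 HF i z))).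
  replace_at HD 7 2 (phi_phiI_assoc i q x).
  replace_at HD 4 2 (phi_phiI_assoc_sym p j x).
  replace_at HD 1 2 (phi_phiI_assoc p y j').
  replace_at HD 0 2 (heq_whisk (pb F j') (idm _) (eq_heq (phi_iso2 HF p y))).
  hsolve HD.
Qed.

Lemma pb_square_cube :
  paste_via_top = paste_via_bottom ->
  heq (hc (pb_square J') (i2 (pb F p)) ;; hc (i2 (pb F x)) (pb_square K) ;;
       hc (pb_square I') (i2 (pb F i)))
      (hc (i2 (pb F j')) (pb_square I) ;; hc (pb_square K') (i2 (pb F w)) ;;
       hc (i2 (pb F q')) (pb_square J)).
Proof.
  intros Hcube. eapply heq_trans; [apply heq_sym, pb_paste_via_bottom |].
  rewrite <- Hcube. apply pb_paste_via_top.
Qed.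

End PullbackSquares.

Section SquareMates.
Context (S : Setting) (HS : SettingLaws S) (X Y Z W : sC S)
        (j : hom X Y) (q : hom X Z) (i : hom Z W) (p : hom Y W) (a : cell (cmp p j) (cmp i q)).

Lemma Bsq_Bmate (hp : smor (sB S) p) (hq : smor (sB S) q) :
  Bsq S j q i p hp hq a = Bmate (etaB S hq) (epsB S hp) (pb_square (sF S) a).
Proof. apply heq_eq. unfold Bsq, Bmate, pb_square, ps, us. hsolve (law_D HS). Qed.

Lemma Asq_Amate (hi : smor (sA S) i) (hj : smor (sA S) j) :
  Asq S j q i p hi hj a = Amate (epsA S hj) (etaA S hi) (pb_square (sF S) a).
Proof. apply heq_eq. unfold Asq, Amate, pb_square, sh, us. hsolve (law_D HS). Qed.

End SquareMates.

Theorem mainTheorem16 (S : Setting) (HS : SettingLaws S)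
    (X' Y' Z' W' X Y Z W : sC S)
    (* edges in A *)
    (j' : hom X' Y') (i' : hom Z' W') (j : hom X Y) (i : hom Z W)
    (hj' : smor (sA S) j') (hi' : smor (sA S) i') (hj : smor (sA S) j) (hi : smor (sA S) i)
    (* edges in B *)
    (q' : hom X' Z') (p' : hom Y' W') (q : hom X Z) (p : hom Y W)
    (hq' : smor (sB S) q') (hp' : smor (sB S) p') (hq : smor (sB S) q) (hp : smor (sB S) p)
    (* vertical edges in C *)
    (x : hom X' X) (y : hom Y' Y) (z : hom Z' Z) (w : hom W' W)
    (* faces *)
    (I : cell (cmp p y) (cmp w p'))       (* right *)
    (I' : cell (cmp q x) (cmp z q'))      (* left *)
    (J : cell (cmp w i') (cmp i z))       (* front, beta *)
    (J' : cell (cmp y j') (cmp j x))      (* back, beta' *)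
    (K : cell (cmp p j) (cmp i q))        (* bottom *)
    (K' : cell (cmp p' j') (cmp i' q'))   (* top *)
    (* 2-commutativity of the cube *)
    (Hcube :
      vc (hc J (i2 q')) (vc (ecast (cmpA w i' q')) (vc (hc (i2 w) K')
        (vc (ecast (eq_sym (cmpA w p' j'))) (hc I (i2 j')))))
      = vc (ecast (cmpA i z q')) (vc (hc (i2 i) I') (vc (ecast (eq_sym (cmpA i q x)))
        (vc (hc K (i2 x)) (vc (ecast (cmpA p j x)) (vc (hc (i2 p) J')
          (ecast (eq_sym (cmpA p y j')))))))))
    (* B_K and B_K' are invertible *)
    (Kinv : cell (cmp (ps S hq) (us S j)) (cmp (us S i) (ps S hp)))
    (HKinv : IsInverse (Bsq S j q i p hp hq K) Kinv)
    (K'inv : cell (cmp (ps S hq') (us S j')) (cmp (us S i') (ps S hp')))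
    (HK'inv : IsInverse (Bsq S j' q' i' p' hp' hq' K') K'inv) :
  (* A_J' o G_K' o B_I' *)
  vc (hc (i2 (ps S hp')) (Asq S j' x j y hj hj' J'))
  (vc (ecast (eq_sym (cmpA (ps S hp') (sh S hj') (us S x))))
  (vc (hc (Gsq S j' q' i' p' hi' hj' hp' hq' K'inv) (i2 (us S x)))
  (vc (ecast (cmpA (sh S hi') (ps S hq') (us S x)))
      (hc (i2 (sh S hi')) (Bsq S x q' z q hq hq' I')))))
  =
  (* B_I o G_K o A_J *)
  vc (ecast (eq_sym (cmpA (ps S hp') (us S y) (sh S hj))))
  (vc (hc (Bsq S y p' w p hp hp' I) (i2 (sh S hj)))
  (vc (ecast (cmpA (us S w) (ps S hp) (sh S hj)))
  (vc (hc (i2 (us S w)) (Gsq S j q i p hi hj hp hq Kinv))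
  (vc (ecast (eq_sym (cmpA (us S w) (sh S hi) (ps S hq))))
  (vc (hc (Asq S i' z i w hi hi' J) (i2 (ps S hq)))
      (ecast (cmpA (sh S hi') (us S z) (ps S hq)))))))).
Proof.
  rewrite !(Asq_Amate HS), !(Bsq_Bmate HS).
  rewrite (Bsq_Bmate HS) in HKinv, HK'inv.
  eapply mate_cube.
  - exact (law_D HS).
  - apply (adj_A HS).
  - apply (adj_A HS).
  - apply (adj_B HS).
  - apply (adj_B HS).
  - exact (pb_square_cube (law_F HS) (law_D HS) Hcube).
  - exact HKinv.
  - exact HK'inv.
Qed.
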